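(* Let $p,q,r$ be integers with $1<p<q<r$, $p$ odd and $pq+pr-qr=1$, and let $n_p=(p-1)/2$. Then $D(p,q,r)=p-1$ if and only if $q-p\ge n_p$.
   Context: $t_{p,q}$, $\alpha_{p,q}$ are the quotient and remainder of $n_p$ divided by $q-p$ ($n_p=t_{p,q}(q-p)+\alpha_{p,q}$, $0\le\alpha_{p,q}<q-p$), and $D(p,q,r)=(t_{p,q}+1)(n_p+\alpha_{p,q})$. *)

From mathcomp Require Import all_boot all_order all_algebra.
Set Implicit Arguments. Unset Strict Implicit. Unset Printing Implicit Defensive.

Definition n_ (p : nat) : nat := (p - 1) %/ 2.
Definition t_ (p q : nat) : nat := n_ p %/ (q - p).
Definition alpha_ (p q : nat) : nat := n_ p %% (q - p).
Definition D (p q r : nat) : nat := (t_ p q + 1) * (n_ p + alpha_ p q).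

From mathcomp Require Import all_boot all_order all_algebra.
From mathcomp Require Import zify.

(* Since p is odd, p - 1 = 2 n_p, so the claim is that, for d = q - p > 0 and
   n = t d + α with 0 <= α < d, one has (t + 1)(n + α) = 2n iff n <= d.
   If n < d then t = 0 and α = n; if n = d then t = 1 and α = 0.  If n > d then
   t >= 1, and either α > 0, so (t + 1)(n + α) >= 2(n + α) > 2n, or α = 0 and
   t >= 2, so (t + 1) n >= 3n > 2n. *)

Lemma n_double (p : nat) : odd p -> p - 1 = 2 * n_ p.
Proof.
rewrite /n_; case: p => [|p] //= /negbTE p_even.
by rewrite subn1 /= {1}(divn_eq p 2) modn2 p_even addn0 mulnC.
Qed.

Lemma divn_modn_double_le (n d : nat) :
  n <= d -> (n %/ d + 1) * (n + n %% d) = 2 * n.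
Proof.
rewrite leq_eqVlt => /orP[/eqP <- | lt_nd].
  by case: n => [|n]; rewrite ?divnn ?modnn //=; lia.
by rewrite divn_small // modn_small //; lia.
Qed.

Lemma double_lt_divn_modn {n d : nat} :
  0 < d -> d < n -> 2 * n < (n %/ d + 1) * (n + n %% d).
Proof.
move=> d_gt0 lt_dn.
have def_n := divn_eq n d.
have t_gt0 : 0 < n %/ d by rewrite divn_gt0 // ltnW.
have [a_eq0 | a_gt0] := posnP (n %% d); last by nia.
have t_ge2 : 1 < n %/ d.
  by rewrite ltnNge; apply: contraTN lt_dn => t_le1; rewrite -leqNgt; nia.
by rewrite a_eq0; nia.
Qed.

Lemma divn_modn_double_iff (n d : nat) :
  0 < d -> (n %/ d + 1) * (n + n %% d) = 2 * n <-> n <= d.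
Proof.
move=> d_gt0; split; last exact: divn_modn_double_le.
move=> eq_double; rewrite leqNgt; apply/negP => lt_dn.
by have := double_lt_divn_modn d_gt0 lt_dn; rewrite eq_double ltnn.
Qed.

Theorem proposition4p3 (p q r : nat) :
  1 < p -> p < q -> q < r -> odd p ->
  ((Posz p * Posz q + Posz p * Posz r - Posz q * Posz r)%R = (1%R : int)) ->
  (D p q r = p - 1 <-> n_ p <= q - p).
Proof.
move=> _ lt_pq _ odd_p _.
rewrite /D /t_ /alpha_ n_double //.
by apply: divn_modn_double_iff; rewrite subn_gt0.
Qed.
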